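(* For every $n\ge 2$ and every pure state $|\psi\rangle$ on a set $V$ of $n$ qubits, the entanglement width satisfies $ew(|\psi\rangle)\le\lceil n/3\rceil$.
   Context: For a pure state $|\psi\rangle$ on a set $V$ of qubits and a bipartition $V=A\sqcup B$, with Schmidt decomposition $|\psi\rangle=\sum_i\alpha_i|\psi_i\rangle_A|\phi_i\rangle_B$ ($\alpha_i>0$), the bipartite entanglement entropy is $E_{A,B}(|\psi\rangle)=-\sum_i\alpha_i^2\log_2(\alpha_i^2)$. A subcubic tree is a tree with all vertex degrees at most 3. A branch decomposition of $V$ is a pair $(T,\mathcal{L})$ where $T$ is a subcubic tree and $\mathcal{L}$ a bijection from the leaves of $T$ to $V$; removing an edge $e$ of $T$ splits the leaves into two sets, hence via $\mathcal{L}$ induces a bipartition $A^e\sqcup B^e$ of $V$. The width of $(T,\mathcal{L})$ is $\max_{e\in E(T)}E_{A^e,B^e}(|\psi\rangle)$, and the entanglement width $ew(|\psi\rangle)$ is the minimum width over all branch decompositions of $V$. *)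

From HB Require Import structures.
From mathcomp Require Import all_boot all_order all_algebra.
From mathcomp Require Import all_classical all_reals.
From mathcomp Require Import exp.
From mathcomp Require Import complex.

Set Implicit Arguments.
Unset Strict Implicit.
Unset Printing Implicit Defensive.

Import Order.TTheory GRing.Theory Num.Theory.
Local Open Scope ring_scope.

Section Defs.
Variable R : realType.
Local Notation C := R[i].

Definition log2 (x : R) : R := ln x / ln 2.

Variable V : finType.

(* classical configurations (computational basis labels) of the qubits in V *)
Definition config := {ffun V -> bool}.

Definition pure_state (psi : {ffun config -> C}) : Prop :=
  \sum_(x : config) psi x * (psi x)^* = 1.

Definition qubits (S : {set V}) := {v : V | v \in S}.
Definition configS (S : {set V}) := {ffun qubits S -> bool}.

Definition restr (S : {set V}) (x : config) : configS S :=
  [ffun q : qubits S => x (val q)].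

Definition orthonormal (S : {set V}) (k : nat) (u : 'I_k -> {ffun configS S -> C}) :=
  forall i j : 'I_k, \sum_(a : configS S) (u i a)^* * u j a = (i == j)%:R.

Definition schmidt_decomp (psi : {ffun config -> C}) (A : {set V})
  (k : nat) (alpha : 'I_k -> R) (u : 'I_k -> {ffun configS A -> C})
  (w : 'I_k -> {ffun configS (~: A) -> C}) : Prop :=
  [/\ forall i, 0 < alpha i,
      orthonormal u, orthonormal w &
      forall x : config,
        psi x = \sum_(i < k) (alpha i)%:C%C * u i (restr A x) * w i (restr (~: A) x)].

Definition schmidt_entropy (k : nat) (alpha : 'I_k -> R) : R :=
  - \sum_(i < k) (alpha i ^+ 2) * log2 (alpha i ^+ 2).

(* the set of values -\sum alpha_i^2 log2 alpha_i^2 over all Schmidt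
   decompositions (this value does not depend on the decomposition) *)
Definition schmidt_entropies (psi : {ffun config -> C}) (A : {set V}) : set R :=
  [set h | exists k alpha u w,
     @schmidt_decomp psi A k alpha u w /\ h = schmidt_entropy alpha].

Definition ent_entropy (psi : {ffun config -> C}) (A : {set V}) : R :=
  xget 0 (schmidt_entropies psi A).

Definition simple_graph (m : nat) (adj : rel 'I_m) :=
  irreflexive adj /\ symmetric adj.

Definition degree (m : nat) (adj : rel 'I_m) (x : 'I_m) : nat :=
  #|[set y | adj x y]|.

Definition is_tree (m : nat) (adj : rel 'I_m) : Prop :=
  [/\ simple_graph adj, (0 < m)%N,
      (forall x y, connect adj x y) &
      forall c : seq 'I_m, uniq c -> (2 < size c)%N -> ~~ cycle adj c].

Definition subcubic_tree (m : nat) (adj : rel 'I_m) : Prop :=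
  is_tree adj /\ forall x, (degree adj x <= 3)%N.

Definition is_leaf (m : nat) (adj : rel 'I_m) (x : 'I_m) : bool :=
  (degree adj x == 1)%N.

(* a branch decomposition (T, L) of V: T subcubic tree on 'I_m, and the
   bijection L from the leaves of T to V is given through its inverse
   lab : V -> 'I_m, an injection whose image is exactly the set of leaves *)
Definition branch_decomp (m : nat) (adj : rel 'I_m) (lab : V -> 'I_m) : Prop :=
  [/\ subcubic_tree adj, injective lab,
      (forall v, is_leaf adj (lab v)) &
      (forall x, is_leaf adj x -> exists v, lab v = x)].

Definition remove_edge (m : nat) (adj : rel 'I_m) (u v : 'I_m) : rel 'I_m :=
  fun x y => adj x y && ~~ (((x == u) && (y == v)) || ((x == v) && (y == u))).

(* A^e for the edge e = {u, v}: the elements of V labelling the leaves on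
   u's side after removing e (B^e is its complement) *)
Definition edge_side (m : nat) (adj : rel 'I_m) (lab : V -> 'I_m) (u v : 'I_m)
  : {set V} := [set x | connect (remove_edge adj u v) u (lab x)].

Definition bd_width (psi : {ffun config -> C}) (m : nat) (adj : rel 'I_m)
  (lab : V -> 'I_m) : R :=
  \big[Num.max/0]_(p : 'I_m * 'I_m | adj p.1 p.2)
     ent_entropy psi (edge_side adj lab p.1 p.2).

(* entanglement width: minimum (infimum, which is attained) of the widths *)
Definition ent_width (psi : {ffun config -> C}) : R :=
  inf [set w | exists (m : nat) (adj : rel 'I_m) (lab : V -> 'I_m),
          branch_decomp adj lab /\ w = bd_width psi adj lab].

End Defs.

From HB Require Import structures.
From mathcomp Require Import all_boot all_order all_algebra.
From mathcomp Require Import all_classical all_reals.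
From mathcomp Require Import exp.
From mathcomp Require Import complex.
From mathcomp Require Import zify ring lra.

Set Implicit Arguments.
Unset Strict Implicit.
Unset Printing Implicit Defensive.

Import Order.TTheory GRing.Theory Num.Theory.

(* The Schmidt vectors of a cut (A, B) are orthonormal in C^(2^|A|)
   and in C^(2^|B|), so there are at most 2^min(|A|,|B|) Schmidt coefficients; as
   their squares sum to 1, Gibbs' inequality bounds E_{A,B} by min(|A|,|B|).  It
   remains to exhibit a subcubic tree, with the n qubits as leaves, in which every
   edge has at most ceil(n/3) leaves on one of its sides: hang three caterpillars
   from a common root and deal the qubits out to them in turn.  Cutting an edge
   separates a tail of one caterpillar, which carries at most ceil(n/3) qubits. *)

Lemma remove_edge_sym m (adj : rel 'I_m) u v :
  symmetric adj -> symmetric (remove_edge adj u v).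
Proof.
by move=> adj_sym x y; rewrite /remove_edge adj_sym orbC (andbC (x == v)) (andbC (x == u)).
Qed.

Lemma remove_edgeC m (adj : rel 'I_m) u v : remove_edge adj u v =2 remove_edge adj v u.
Proof. by move=> x y; rewrite /remove_edge orbC. Qed.

Section ParentTree.
Variables (m : nat) (par : nat -> nat).
Hypothesis par_lt : forall x, (0 < x)%N -> (par x < x)%N.
Hypothesis par0 : par 0 = 0.

Definition parent_adj : rel 'I_m :=
  fun x y => (x != y :> nat) && ((par x == y) || (par y == x)).

Lemma par_leq x : (par x <= x)%N.
Proof. by case: x => [|x]; rewrite ?par0 // ltnW ?par_lt. Qed.

Definition parent (x : 'I_m) : 'I_m :=
  Ordinal (leq_ltn_trans (par_leq x) (ltn_ord x)).

Lemma parent_adj_sym : symmetric parent_adj.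
Proof. by move=> x y; rewrite /parent_adj eq_sym orbC. Qed.

Lemma parent_adj_irr : irreflexive parent_adj.
Proof. by move=> x; rewrite /parent_adj eqxx. Qed.

Lemma parent_adjP x y : parent_adj x y ->
  (par x = y /\ (y < x)%N) \/ (par y = x /\ (x < y)%N).
Proof.
have par_pos z : par z != z -> (par z < z)%N.
  by case: z => [|z]; rewrite ?par0 ?eqxx // => _; apply: par_lt.
case/andP=> x_neq_y /orP[] /eqP par_eq; [left | right]; split => //.
  by rewrite -par_eq par_pos // par_eq eq_sym.
by rewrite -par_eq par_pos // par_eq.
Qed.

Lemma parent_adj_parent (x : 'I_m) : (0 < x)%N -> parent_adj x (parent x).
Proof. by move=> x_gt0; rewrite /parent_adj /= eqxx neq_ltn par_lt ?orbT. Qed.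

Lemma connect_root (o x : 'I_m) : o = 0 :> nat -> connect parent_adj x o.
Proof.
move=> o0; have [k] := ubnP (val x); elim: k x => [// | k IH] x x_lt.
have [x0 | x_gt0] := posnP x.
  by have -> : x = o by apply/val_inj; rewrite /= o0 x0.
apply: connect_trans (connect1 (parent_adj_parent x_gt0)) (IH _ _).
exact: leq_trans (par_lt x_gt0) _.
Qed.

(* The vertex of largest index on a cycle has both cycle neighbours as parent. *)
Lemma parent_adj_acyclic (c : seq 'I_m) :
  uniq c -> (2 < size c)%N -> ~~ cycle parent_adj c.
Proof.
case: c => [//|x0 c0] c_uniq c_size; apply/negP => c_cycle.
set c := x0 :: c0 in c_uniq c_size c_cycle *.
have [M M_in M_max] := @arg_maxnP _ x0 (mem c) val (mem_head _ _).
have [i q rot_c] := rot_to M_in.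
have q_uniq : uniq (M :: q) by rewrite -rot_c rot_uniq.
have q_size : (2 < size (M :: q))%N by rewrite -rot_c size_rot.
have q_cycle : cycle parent_adj (M :: q) by rewrite -rot_c rot_cycle.
have q_max y : y \in q -> (y <= M)%N.
  move=> y_in; apply: M_max.
  by rewrite /= -(mem_rot i) rot_c inE y_in orbT.
clear rot_c; case: q => [|y q] // in q_uniq q_size q_cycle q_max.
case/lastP: q => [|q z] // in q_uniq q_size q_cycle q_max.
move: q_cycle; rewrite /cycle rcons_path last_cons last_rcons /= rcons_path.
case/andP=> /and3P[adj_My _ _] adj_zM.
have par_M x : parent_adj M x -> x \in y :: rcons q z -> par M = x.
  move=> adj_Mx /q_max x_le; case: (parent_adjP adj_Mx) => [[] // | [_ M_lt]].
  by move: (leq_ltn_trans x_le M_lt); rewrite ltnn.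
have z_in : z \in y :: rcons q z by rewrite inE mem_rcons mem_head orbT.
have y_eq_z : y = z.
  apply/val_inj; rewrite /= -(par_M y adj_My (mem_head _ _)) (par_M z _ z_in) //.
  by rewrite parent_adj_sym.
by move: q_uniq; rewrite y_eq_z /= mem_rcons mem_head andbF.
Qed.

Lemma parent_tree : (0 < m)%N -> is_tree parent_adj.
Proof.
move=> m_gt0; split=> //; first by split; [exact: parent_adj_irr | exact: parent_adj_sym].
  move=> x y; apply: connect_trans (connect_root (o := Ordinal m_gt0) x erefl) _.
  by rewrite (sym_connect_sym parent_adj_sym) connect_root.
exact: parent_adj_acyclic.
Qed.

(* D is closed under taking parents except at c, hence contains the component of c
   once the edge {c, parent c} is cut, and misses that of parent c. *)
Section SubtreeSide.
Variables (D : pred nat) (c : 'I_m).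
Hypotheses (c_gt0 : (0 < c)%N) (D_c : D c) (D_par_c : ~~ D (par c)).
Hypothesis D_par : forall y : 'I_m, (0 < y)%N -> y != c :> nat -> D y = D (par y).

Local Notation cut := (remove_edge parent_adj c (parent c)).

Lemma cut_closed : closed cut [pred x : 'I_m | D x].
Proof.
move=> x y cut_xy; rewrite !inE /=.
wlog [par_x y_lt] : x y cut_xy / par x = y /\ (y < x)%N.
  move=> wlog_xy; case/andP: (cut_xy) => /parent_adjP[] par_eq _.
    exact: wlog_xy cut_xy par_eq.
  by rewrite (wlog_xy y x _ par_eq) // remove_edge_sym //; exact: parent_adj_sym.
have x_neq_c : x != c :> nat.
  apply/eqP => x_c; have x_eq : x = c by apply/val_inj.
  have y_eq : y = parent c by apply/val_inj; rewrite /= -par_x x_c.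
  by move: cut_xy; rewrite x_eq y_eq /remove_edge !eqxx andbF.
by rewrite D_par ?par_x // (leq_ltn_trans _ y_lt).
Qed.

Lemma cut_connect_root (o x : 'I_m) : o = 0 :> nat -> ~~ D x -> connect cut x o.
Proof.
move=> o0; have [k] := ubnP (val x); elim: k x => [// | k IH] x x_lt ND_x.
have [x0 | x_gt0] := posnP x.
  have -> : x = o by apply/val_inj; rewrite /= o0 x0.
  exact: connect0.
have x_neq_c : x != c by apply: contraNneq ND_x => ->.
have cut_x : cut x (parent x).
  rewrite /remove_edge parent_adj_parent //= (negPf x_neq_c) /=.
  apply/andP=> -[/eqP/(congr1 val) /= x_val /eqP/(congr1 val) /= par_x_val].
  by move: (par_lt x_gt0) (par_lt c_gt0); lia.
apply: connect_trans (connect1 cut_x) (IH _ _ _) => /=.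
  exact: leq_trans (par_lt x_gt0) _.
by rewrite -D_par.
Qed.

Variables (T : finType) (lab : T -> 'I_m).

Lemma edge_side_child_sub :
  edge_side parent_adj lab c (parent c) \subset [set v | D (lab v)].
Proof.
apply/fintype.subsetP => v; rewrite !inE => /(closed_connect cut_closed).
by rewrite !inE D_c.
Qed.

Lemma edge_side_parent_compl_sub :
  ~: edge_side parent_adj lab (parent c) c \subset [set v | D (lab v)].
Proof.
have m_gt0 : (0 < m)%N := leq_ltn_trans (leq0n _) (ltn_ord c).
pose o := Ordinal m_gt0.
apply/fintype.subsetP => v; rewrite !inE; apply: contraR => ND_v.
rewrite (eq_connect (remove_edgeC _ _ _)).
have cut_sym : connect_sym cut.
  by apply: sym_connect_sym; apply: remove_edge_sym; exact: parent_adj_sym.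
apply: (connect_trans (y := o)); first exact: cut_connect_root.
by rewrite cut_sym cut_connect_root.
Qed.

End SubtreeSide.

End ParentTree.

(* Vertex 0 is the root; the odd vertices form the three chains 1, 7, 13, ...,
   3, 9, 15, ... and 5, 11, 17, ... below it (truncated subtraction sends 1, 3, 5
   to 0); the even vertex 2r + 2 is a leaf below 2r + 1 carrying the r-th qubit. *)
Definition spine_par (x : nat) : nat := if odd x then x - 6 else x.-1.

Lemma spine_par_lt x : (0 < x)%N -> (spine_par x < x)%N.
Proof. by rewrite /spine_par; case: ifP; lia. Qed.

Lemma spine_par0 : spine_par 0 = 0. Proof. by []. Qed.

(* The vertices below c: a single leaf, or a tail c, c + 6, ... of a chain together
   with its leaves c + 1, c + 7, .... *)
Definition spine_subtree (c y : nat) : bool :=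
  if odd c then (c <= y) && ((y - c) %% 6 < 2) else y == c.

Lemma spine_subtree_par c y : (0 < c)%N -> (0 < y)%N -> y != c ->
  spine_subtree c y = spine_subtree c (spine_par y).
Proof. by rewrite /spine_subtree /spine_par; repeat case: ifP; lia. Qed.

Lemma spine_subtree_self c : spine_subtree c c.
Proof. by rewrite /spine_subtree; case: ifP; lia. Qed.

Lemma spine_subtree_par_self c : (0 < c)%N -> ~~ spine_subtree c (spine_par c).
Proof. by rewrite /spine_subtree /spine_par; repeat case: ifP; lia. Qed.

Lemma spine_subtree_leaf_inj c r r' :
  spine_subtree c (2 * r + 2) -> spine_subtree c (2 * r' + 2) -> r %/ 3 = r' %/ 3 -> r = r'.
Proof. by rewrite /spine_subtree; case: ifP; lia. Qed.

Lemma card_leq_seq m (A : {set 'I_m}) (s : seq nat) :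
  {subset [seq val x | x in A] <= s} -> (#|A| <= size s)%N.
Proof.
move=> sub_s; rewrite cardE -(size_map val) uniq_leq_size //.
by rewrite map_inj_uniq ?enum_uniq //; exact: val_inj.
Qed.

Section Spine.
Variable n : nat.
Local Notation m := (2 * n).+1.
Local Notation adj := (@parent_adj m spine_par).

Definition spine_nbrs (x : nat) : seq nat :=
  if x == 0 then [:: 1; 3; 5] else if odd x then [:: spine_par x; x.+1; x + 6]
  else [:: spine_par x].

Lemma spine_nbrsP (x y : 'I_m) : adj x y -> nat_of_ord y \in spine_nbrs x.
Proof.
rewrite /parent_adj /spine_nbrs /spine_par.
by repeat case: ifP; rewrite !inE; lia.
Qed.

Lemma spine_degree_leq (x : 'I_m) : (degree adj x <= size (spine_nbrs x))%N.
Proof.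
apply: card_leq_seq => _ /mapP[y y_in ->]; apply: spine_nbrsP.
by move: y_in; rewrite mem_enum inE.
Qed.

Lemma spine_degree_le3 (x : 'I_m) : (degree adj x <= 3)%N.
Proof.
apply: leq_trans (spine_degree_leq x) _.
by rewrite /spine_nbrs; repeat case: ifP.
Qed.

Lemma spine_leafE (x : 'I_m) : (1 < n)%N -> is_leaf adj x = (0 < x)%N && ~~ odd x.
Proof.
move=> n_gt1; have x_lt := ltn_ord x; rewrite /is_leaf /degree.
case: (boolP ((0 < x)%N && ~~ odd x)) => [/andP[x_gt0 x_even] | not_leaf].
  rewrite eqn_leq; apply/andP; split.
    apply: leq_trans (spine_degree_leq x) _.
    by rewrite /spine_nbrs (negPf x_even) ifN // -lt0n.
  apply/card_gt0P; exists (parent spine_par_lt spine_par0 x).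
  by rewrite inE parent_adj_parent //; exact: spine_par_lt.
suff : (1 < #|[set y | adj x y]|)%N by case: #|_| => [|[|]].
have three_lt : (3 < m)%N by lia.
apply/card_gt1P; have [x0 | x_gt0] := posnP x.
  exists (inord 1), (inord 3).
  by rewrite !inE /parent_adj -!val_eqE /= !inordK ?x0 // (ltn_trans _ three_lt).
have x_odd : odd x by move: not_leaf; rewrite x_gt0 negbK.
have x1_lt : (x.+1 < m)%N by move: x_odd; lia.
exists (inord x.+1), (parent spine_par_lt spine_par0 x).
rewrite !inE parent_adj_parent ?andbT // /parent_adj -!val_eqE /= inordK //.
by rewrite /spine_par /= x_odd /=; split; lia.
Qed.

End Spine.

Section SpineDecomposition.
Variable V : finType.
Local Notation n := #|V|.
Local Notation m := (2 * n).+1.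
Local Notation adj := (@parent_adj m spine_par).
Local Notation parent_spine := (parent spine_par_lt spine_par0).

Lemma enum_rank_lt (v : V) : (enum_rank v < n)%N.
Proof. exact: ltn_ord. Qed.

Lemma spine_lab_lt (v : V) : (2 * enum_rank v + 2 < m)%N.
Proof. by have := enum_rank_lt v; lia. Qed.

Definition spine_lab (v : V) : 'I_m := Ordinal (spine_lab_lt v).

Local Notation subtree c := [set v | spine_subtree c (spine_lab v)].

Lemma spine_branch_decomp : (1 < n)%N -> branch_decomp adj spine_lab.
Proof.
move=> n_gt1; split.
- split; last exact: spine_degree_le3.
  exact: parent_tree spine_par_lt spine_par0 _.
- move=> u v /(congr1 val) /= eq_lab.
  apply/enum_rank_inj/ord_inj; move: eq_lab => /addIn/eqP.
  by rewrite eqn_pmul2l // => /eqP.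
- by move=> v; rewrite spine_leafE //=; lia.
move=> x; rewrite spine_leafE // => /andP[x_gt0 x_even].
have r_lt : ((x - 2) %/ 2 < n)%N by move: (ltn_ord x) x_gt0 x_even; lia.
exists (enum_val (Ordinal r_lt)); apply/val_inj; rewrite /= enum_valK /=.
have half_even k : (0 < k)%N -> ~~ odd k -> 2 * ((k - 2) %/ 2) + 2 = k by lia.
exact: half_even.
Qed.

Lemma card_spine_subtree (c : nat) :
  (#|subtree c| <= (n + 2) %/ 3)%N.
Proof.
have third_lt (v : V) : (enum_rank v %/ 3 < (n + 2) %/ 3)%N.
  by have := enum_rank_lt v; lia.
rewrite -[X in (_ <= X)%N]card_ord.
apply: (@leq_card_in _ _ (fun v => Ordinal (third_lt v))) => u v.
rewrite !inE => sub_u sub_v /(congr1 val) /= eq_third.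
exact/enum_rank_inj/ord_inj/(spine_subtree_leaf_inj sub_u sub_v).
Qed.

Lemma spine_edge_sides (c : 'I_m) : (0 < c)%N ->
  edge_side adj spine_lab c (parent_spine c) \subset subtree c /\
  ~: edge_side adj spine_lab (parent_spine c) c \subset subtree c.
Proof.
move=> c_gt0; have D_par (y : 'I_m) : (0 < y)%N -> y != c :> nat ->
    spine_subtree c y = spine_subtree c (spine_par y) := spine_subtree_par c_gt0.
split.
  exact (edge_side_child_sub spine_par_lt spine_par0 (spine_subtree_self c)
    D_par spine_lab).
exact (edge_side_parent_compl_sub spine_par_lt spine_par0 c_gt0 (spine_subtree_self c)
  (spine_subtree_par_self c_gt0) D_par spine_lab).
Qed.

Lemma spine_edge_side_small (a b : 'I_m) : adj a b ->
  exists2 S : {set V}, (#|S| <= (n + 2) %/ 3)%N &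
    (edge_side adj spine_lab a b \subset S) || (~: edge_side adj spine_lab a b \subset S).
Proof.
case/(parent_adjP spine_par_lt spine_par0) => [[par_a b_lt] | [par_b a_lt]].
  have -> : b = parent_spine a by apply/val_inj.
  exists (subtree a); first exact: card_spine_subtree.
  by rewrite (spine_edge_sides _).1 ?(leq_ltn_trans _ b_lt).
have -> : a = parent_spine b by apply/val_inj.
exists (subtree b); first exact: card_spine_subtree.
by rewrite (spine_edge_sides _).2 ?orbT ?(leq_ltn_trans _ a_lt).
Qed.

End SpineDecomposition.

Local Open Scope ring_scope.

Lemma sum_ord_eq1_gt0 (R : nzSemiRingType) k (f : 'I_k -> R) : \sum_i f i = 1 -> (0 < k)%N.
Proof. by case: k f => // f; rewrite big_ord0 => /esym/eqP; rewrite oner_eq0. Qed.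

Lemma entropy_le_ln_card (R : realType) k (p : 'I_k -> R) :
  (forall i, 0 < p i) -> \sum_i p i = 1 -> - \sum_i p i * ln (p i) <= ln k%:R.
Proof.
move=> p_gt0 p_sum1.
have k_gt0 := sum_ord_eq1_gt0 p_sum1.
have kR_gt0 : 0 < (k%:R : R) by rewrite ltr0n.
have ln_le (y : R) : 0 < y -> ln y <= y - 1.
  by move=> y_gt0; have := @le_ln1Dx R (y - 1); rewrite addrCA subrr addr0; apply; lra.
(* ln y <= y - 1 at y = 1 / (k p_i), weighted by p_i *)
have term_le i : - (p i * ln (p i)) - p i * ln k%:R <= k%:R^-1 - p i.
  have kp_gt0 : 0 < k%:R * p i by rewrite mulr_gt0.
  have y_gt0 : 0 < (k%:R * p i)^-1 by rewrite invr_gt0.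
  have := ler_wpM2l (ltW (p_gt0 i)) (ln_le _ y_gt0).
  rewrite lnV ?posrE // lnM ?posrE // invfM mulrBr mulrCA mulfV ?gt_eqF //.
  lra.
have : \sum_i (- (p i * ln (p i)) - p i * ln k%:R) <= \sum_i (k%:R^-1 - p i).
  by apply: ler_sum => i _; exact: term_le.
rewrite !big_split /= sumr_const card_ord !sumrN -mulr_suml p_sum1.
by rewrite -[k%:R^-1 *+ k]mulr_natr mulVf ?gt_eqF //; lra.
Qed.

Lemma orthonormal_leq_card (F : fieldType) (T : finType) k
    (u : 'I_k -> T -> F) (c : F -> F) :
  (forall i j, \sum_a c (u i a) * u j a = (i == j)%:R) -> (k <= #|T|)%N.
Proof.
move=> orth_u.
pose U : 'M[F]_(#|T|, k) := \matrix_(a, i) u i (enum_val a).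
pose Uc : 'M[F]_(k, #|T|) := \matrix_(i, a) c (u i (enum_val a)).
have UcU : Uc *m U = 1%:M.
  apply/matrixP => i j; rewrite !mxE -orth_u (big_enum_val (A := T)) /=.
  by apply: eq_bigr => a _; rewrite !mxE.
by rewrite -(mxrank1 F k) -UcU (leq_trans (mxrankM_maxl _ _)) ?rank_leq_col.
Qed.

Section Bipartition.
Variables (V : finType) (A : {set V}).

Lemma card_configS (S : {set V}) : #|{: configS S}| = (2 ^ #|S|)%N.
Proof. by rewrite card_ffun card_bool card_sig. Qed.

Lemma restr_bij : bijective (fun x : config V => (restr A x, restr (~: A) x)).
Proof.
apply: inj_card_bij; last first.
  by rewrite card_prod !card_configS -expnD cardsC card_ffun card_bool.
move=> x y [/ffunP eqA /ffunP eqC]; apply/ffunP => v.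
case: (boolP (v \in A)) => [vA | vNA].
  by have := eqA (exist _ v vA); rewrite !ffunE.
have vC : v \in ~: A by rewrite inE.
by have := eqC (exist _ v vC); rewrite !ffunE.
Qed.

Lemma sum_config_restr (M : nmodType) (G : configS A -> configS (~: A) -> M) :
  \sum_(x : config V) G (restr A x) (restr (~: A) x) = \sum_a \sum_b G a b.
Proof.
by rewrite pair_bigA [RHS](reindex _ (onW_bij _ restr_bij)).
Qed.
End Bipartition.

Lemma sum4_exchange (M : nmodType) (I J K L : finType) (F : I -> J -> K -> L -> M) :
  \sum_a \sum_b \sum_i \sum_j F i j a b = \sum_i \sum_j \sum_a \sum_b F i j a b.
Proof.
under eq_bigr => a _ do rewrite exchange_big.
rewrite exchange_big; apply: eq_bigr => i _.
under eq_bigr => a _ do rewrite exchange_big.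
by rewrite exchange_big.
Qed.

Lemma schmidt_entropy_le (R : realType) k (alpha : 'I_k -> R) s :
  (forall i, 0 < alpha i) -> \sum_i alpha i ^+ 2 = 1 -> (k <= 2 ^ s)%N ->
  schmidt_entropy alpha <= s%:R.
Proof.
move=> alpha_gt0 sqr_sum1 k_le.
have ln2_gt0 : 0 < ln (2 : R) by rewrite ln_gt0 // ltr1n.
have ln_k : ln (k%:R : R) <= s%:R * ln 2.
  have k_gt0 := sum_ord_eq1_gt0 sqr_sum1.
  by rewrite mulr_natl -lnXn // -natrX ler_ln ?posrE ?ltr0n ?expn_gt0 // ler_nat.
have := entropy_le_ln_card (fun i => exprn_gt0 2 (alpha_gt0 i)) sqr_sum1.
rewrite /schmidt_entropy /log2 => /le_trans/(_ ln_k) ent_le.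
under eq_bigr => i _ do rewrite mulrA.
by rewrite -mulr_suml -mulNr ler_pdivrMr.
Qed.

Section Schmidt.
Variables (R : realType) (V : finType) (psi : {ffun config V -> R[i]}) (A : {set V}).
Variables (k : nat) (alpha : 'I_k -> R).
Variables (u : 'I_k -> {ffun configS A -> R[i]}) (w : 'I_k -> {ffun configS (~: A) -> R[i]}).
Hypothesis psi_unit : pure_state psi.
Hypothesis decomp : schmidt_decomp psi alpha u w.

Lemma schmidt_sqr_sum : \sum_i alpha i ^+ 2 = 1.
Proof.
case: decomp => _ orth_u orth_w psiE.
pose v a b := \sum_i ((alpha i)%:C)%C * u i a * w i b.
have norm_psi : \sum_x psi x * (psi x)^* = \sum_a \sum_b v a b * (v a b)^*.
  rewrite -(sum_config_restr (fun a b => v a b * (v a b)^*)).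
  by apply: eq_bigr => x _; rewrite psiE.
have conj_alpha i : ((alpha i)%:C%C)^* = (alpha i)%:C%C := conjc_real _.
have expand a b : v a b * (v a b)^* = \sum_i \sum_j ((alpha i * alpha j)%:C)%C *
                 (((u j a)^* * u i a) * ((w j b)^* * w i b)).
  rewrite rmorph_sum mulr_suml; apply: eq_bigr => i _.
  rewrite mulr_sumr; apply: eq_bigr => j _.
  by rewrite !rmorphM /= conj_alpha; ring.
move: psi_unit; rewrite /pure_state norm_psi.
under eq_bigr => a _ do under eq_bigr => b _ do rewrite expand.
rewrite sum4_exchange.
have orth_sum i j : \sum_a \sum_b ((alpha i * alpha j)%:C)%C *
      (((u j a)^* * u i a) * ((w j b)^* * w i b)) =
    ((alpha i * alpha j)%:C)%C * ((j == i)%:R * (j == i)%:R).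
  rewrite -{1}(orth_u j i) -(orth_w j i) big_distrlr mulr_sumr.
  by apply: eq_bigr => a _; rewrite mulr_sumr.
under eq_bigr => i _ do under eq_bigr => j _ do rewrite orth_sum.
have diag i : \sum_j ((alpha i * alpha j)%:C)%C * ((j == i)%:R * (j == i)%:R) =
              ((alpha i ^+ 2)%:C)%C :> R[i].
  rewrite (bigD1 i) //= eqxx !mulr1 expr2 big1 ?addr0 // => j /negbTE ->.
  by rewrite !mulr0.
under eq_bigr => i _ do rewrite diag.
by rewrite -rmorph_sum -(rmorph1 (real_complex R)) => /complexI.
Qed.

Lemma schmidt_entropy_le_card :
  schmidt_entropy alpha <= #|A|%:R /\ schmidt_entropy alpha <= #|~: A|%:R.
Proof.
have sqr_sum1 := schmidt_sqr_sum.
case: decomp => alpha_gt0 orth_u orth_w _.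
split; apply: schmidt_entropy_le => //; rewrite -card_configS.
  exact: (orthonormal_leq_card (u := fun i a => u i a) orth_u).
exact: (orthonormal_leq_card (u := fun i b => w i b) orth_w).
Qed.

End Schmidt.

Lemma ent_entropy_le_card (R : realType) (V : finType)
    (psi : {ffun config V -> R[i]}) (A : {set V}) :
  pure_state psi -> ent_entropy psi A <= #|A|%:R /\ ent_entropy psi A <= #|~: A|%:R.
Proof.
move=> psi_unit; rewrite /ent_entropy.
case: (pselect (exists h, schmidt_entropies psi A h)) => [ex | nex].
  have [k [alpha [u [w [decomp ->]]]]] := xgetPex 0 ex.
  exact: schmidt_entropy_le_card psi_unit decomp.
by rewrite xgetPN ?ler0n // => h h_in; apply: nex; exists h.
Qed.

Section Width.
Variables (R : realType) (V : finType) (psi : {ffun config V -> R[i]}).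

Lemma bd_width_ge0 m (adj : rel 'I_m) (lab : V -> 'I_m) : 0 <= bd_width psi adj lab.
Proof. by rewrite /bd_width; elim/big_rec: _ => // p x _ x_ge0; rewrite le_max x_ge0 orbT. Qed.

Lemma ent_width_le_bd_width m (adj : rel 'I_m) (lab : V -> 'I_m) :
  branch_decomp adj lab -> ent_width psi <= bd_width psi adj lab.
Proof.
move=> bd; apply: ge_inf; last by exists m, adj, lab.
by exists 0 => _ [m' [adj' [lab' [_ ->]]]]; exact: bd_width_ge0.
Qed.

Lemma bd_width_le_card m (adj : rel 'I_m) (lab : V -> 'I_m) (K : nat) :
  pure_state psi ->
  (forall a b, adj a b -> exists2 S : {set V}, (#|S| <= K)%N &
     (edge_side adj lab a b \subset S) || (~: edge_side adj lab a b \subset S)) ->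
  bd_width psi adj lab <= K%:R.
Proof.
move=> psi_unit small_side; rewrite /bd_width.
apply: bigmax_le => [|[a b] /= adj_ab]; first exact: ler0n.
have [S S_le /orP[] sub_S] := small_side a b adj_ab;
  have [ent_A ent_B] := ent_entropy_le_card (edge_side adj lab a b) psi_unit.
  by apply: le_trans ent_A _; rewrite ler_nat (leq_trans (subset_leq_card sub_S)).
by apply: le_trans ent_B _; rewrite ler_nat (leq_trans (subset_leq_card sub_S)).
Qed.

End Width.

Lemma divn_up_le_ceil (R : realType) (n : nat) :
  ((n + 2) %/ 3)%:R <= (Num.ceil (n%:R / 3 : R))%:~R :> R.
Proof.
have : n%:R / 3 <= (Num.ceil (n%:R / 3 : R))%:~R :> R := Num.Theory.ceil_ge _.
rewrite ler_pdivrMr ?ltr0n // -[n%:R]/((n%:Z)%:~R) -[3%:R]/((3%:Z)%:~R) -intrM ler_int.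
by rewrite -[((n + 2) %/ 3)%:R]/((((n + 2) %/ 3)%:Z)%:~R) ler_int; lia.
Qed.

Theorem mainTheorem6 (R : realType) (V : finType) (n : nat)
  (hV : #|V| = n) (hn : (2 <= n)%N) (psi : {ffun config V -> R[i]})
  (hpsi : pure_state psi) :
  ent_width psi <= (Num.ceil (n%:R / 3 : R))%:~R.
Proof.
subst n; apply: le_trans (divn_up_le_ceil R #|V|).
apply: le_trans (ent_width_le_bd_width psi (spine_branch_decomp hn)) _.
exact: bd_width_le_card hpsi (@spine_edge_side_small V).
Qed.
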